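(* For every integer $d\ge 1$ and real $C\ge 1$, the class $\mathcal{D}^d(C)$ has asymptotic dimension at most $d$.
   Context: $\mathcal{D}^d(C)$ is the class of finite graphs $G$ whose vertices can be mapped to points of $\mathbb{R}^d$ such that any two distinct vertices are mapped to points at Euclidean distance at least $1$, and any two adjacent vertices are mapped to points at Euclidean distance at most $C$. Graphs are metric spaces with the shortest-path distance. For a metric space $(X,d)$, a family $\mathcal U$ of subsets is $D$-bounded if every member has diameter at most $D$, and $r$-disjoint if points in different members are at distance $>r$. A function $D:\mathbb{R}^+\to\mathbb{R}^+$ is an $n$-dimensional control function for $X$ if for every $r>0$ there is a cover $\mathcal U=\mathcal U_1\cup\dots\cup\mathcal U_{n+1}$ of $X$ with each $\mathcal U_i$ $r$-disjoint and each member $D(r)$-bounded; a class has asymptotic dimension at most $n$ if one such function works for all its members. *)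

From HB Require Import structures.
From mathcomp Require Import all_boot all_order all_algebra.
From Stdlib Require Import Rdefinitions.
From mathcomp Require Import reals Rstruct.
Set Implicit Arguments. Unset Strict Implicit. Unset Printing Implicit Defensive.
Import Order.TTheory GRing.Theory Num.Theory.
Local Open Scope ring_scope.

Definition simple_graph (T : finType) (e : rel T) : Prop :=
  symmetric e /\ irreflexive e.

Definition walk (T : finType) (e : rel T) (n : nat) (x y : T) : Prop :=
  exists p : seq T, [/\ path e x p, last x p = y & size p = n].

(* Shortest-path distance d_G(x,y) <= D  (D real; infinite distance between
   different components is never <= D). *)
Definition gdist_le (T : finType) (e : rel T) (x y : T) (D : R) : Prop :=
  exists n : nat, walk e n x y /\ (n%:R <= D).

Definition gdist_gt (T : finType) (e : rel T) (x y : T) (r : R) : Prop :=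
  forall n : nat, walk e n x y -> r < n%:R.

Definition bounded_family (T : finType) (e : rel T) (D : R)
    (U : {set {set T}}) : Prop :=
  forall A, A \in U -> forall x y, x \in A -> y \in A -> gdist_le e x y D.

Definition disjoint_family (T : finType) (e : rel T) (r : R)
    (U : {set {set T}}) : Prop :=
  forall A B, A \in U -> B \in U -> A != B ->
  forall x y, x \in A -> y \in B -> gdist_gt e x y r.

Definition eucl_dist (d : nat) (u v : 'rV[R]_d) : R :=
  Num.sqrt (\sum_(i < d) (u ord0 i - v ord0 i) ^+ 2).

Definition in_Dclass (d : nat) (C : R) (T : finType) (e : rel T) : Prop :=
  exists f : T -> 'rV[R]_d,
    (forall x y, x != y -> 1 <= eucl_dist (f x) (f y)) /\
    (forall x y, e x y -> eucl_dist (f x) (f y) <= C).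

Definition control_function (n : nat) (D : R -> R)
    (T : finType) (e : rel T) : Prop :=
  forall r : R, 0 < r ->
  exists U : 'I_n.+1 -> {set {set T}},
    (forall x : T, exists i, exists2 A, A \in U i & x \in A) /\
    (forall i, disjoint_family e r (U i) /\ bounded_family e (D r) (U i)).

Definition asdim_class_le (n : nat)
    (P : forall T : finType, rel T -> Prop) : Prop :=
  exists D : R -> R, (forall r, 0 < r -> 0 < D r) /\
    forall (T : finType) (e : rel T),
      simple_graph e -> P T e -> control_function n D e.

(* Fix r > 0 and put m = r C, L = 2 m (d + 1).  The d + 1 grids 2 m k + L Z
   (0 <= k <= d) partition 2 m Z, so their open m-neighbourhoods are pairwise
   disjoint and every real number is m-close to at most one of them.  By
   pigeonhole each point of R^d has a shift k at which all d coordinates are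
   m-far from the grid; colour each vertex by such a k and record the cube of
   side L of that shifted grid containing its image.  Two vertices of one colour
   in different cubes have images 2 m apart in some coordinate, hence are at
   graph distance at least 2 r since edges have length at most C.  The clusters
   are the components of "same colour and cube, graph distance <= r": those of
   one colour are r-disjoint, and a cube holds boundedly many 1-separated
   points, so a cluster has boundedly many vertices and diameter O(r). *)

From mathcomp Require Import all_boot all_order all_algebra.
From Stdlib Require Import Rdefinitions.
From mathcomp Require Import reals Rstruct.
From mathcomp Require Import boolp zify ring lra.
Set Implicit Arguments. Unset Strict Implicit. Unset Printing Implicit Defensive.
Import Order.TTheory GRing.Theory Num.Theory.
Local Open Scope ring_scope.

Section Walks.
Variables (T : finType) (e : rel T).

Lemma walk0 x : walk e 0 x x.
Proof. by exists [::]. Qed.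

Lemma walk_cat a b x y z : walk e a x y -> walk e b y z -> walk e (a + b) x z.
Proof.
move=> [p [ep <- <-]] [q [eq <- <-]]; exists (p ++ q).
by rewrite cat_path ep eq last_cat size_cat.
Qed.

Lemma walk_sym n x y : symmetric e -> walk e n x y -> walk e n y x.
Proof.
move=> e_sym [p [ep <- <-]]; elim: p x ep => [|z p IHp] x /=; first by move=> _; exact: walk0.
case/andP=> exz /IHp [q [eq lq sq]]; exists (rcons q x).
by rewrite rcons_path eq lq e_sym exz last_rcons size_rcons sq.
Qed.

Lemma gdist_le_refl D x : 0 <= D -> gdist_le e x x D.
Proof. by exists 0%N; split; first exact: walk0. Qed.

Lemma gdist_le_trans a b D x y z :
  gdist_le e x y a -> gdist_le e y z b -> a + b <= D -> gdist_le e x z D.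
Proof.
move=> [n [wn na]] [k [wk kb]] abD; exists (n + k)%N; split; first exact: walk_cat wn wk.
by rewrite natrD (le_trans _ abD) // lerD.
Qed.

Lemma gdist_le_sym D x y : symmetric e -> gdist_le e x y D -> gdist_le e y x D.
Proof. by move=> e_sym [n [w nD]]; exists n; split => //; apply: walk_sym. Qed.

Lemma gdist_le_path (near : rel T) (r D : R) x p :
  (forall a b, near a b -> gdist_le e a b r) -> path near x p ->
  (size p)%:R * r <= D -> gdist_le e x (last x p) D.
Proof.
move=> near_le; elim: p x D => [|y p IHp] x D /=.
  by rewrite mul0r => _; exact: gdist_le_refl.
case/andP=> /near_le xy /IHp yp pD.
apply: gdist_le_trans xy (yp (D - r) _) _; last by rewrite addrC subrK.
by rewrite lerBrDr; move: pD; rewrite -natr1 mulrDl mul1r.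
Qed.

End Walks.

Lemma coord_le_eucl_dist d (u v : 'rV[R]_d) i : `|u ord0 i - v ord0 i| <= eucl_dist u v.
Proof.
rewrite /eucl_dist -sqrtr_sqr ler_sqrt; last by rewrite sumr_ge0 // => j _; rewrite sqr_ge0.
by rewrite (bigD1 i) //= lerDl sumr_ge0 // => j _; rewrite sqr_ge0.
Qed.

Lemma eucl_dist_lt1 d (u v : 'rV[R]_d) :
  (forall i, `|u ord0 i - v ord0 i| < d.+1%:R^-1) -> eucl_dist u v < 1.
Proof.
move=> uv_small; have d1_gt0 : 0 < d.+1%:R :> R by rewrite ltr0n.
have inv_le1 : d.+1%:R^-1 <= 1 :> R by rewrite invf_le1 // ler1n.
rewrite /eucl_dist -sqrtr1 ltr_sqrt ?ltr01 //.
apply: (@le_lt_trans _ _ (\sum_(i < d) d.+1%:R^-1)).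
  apply: ler_sum => i _; rewrite -real_normK ?num_real //.
  have := uv_small i; have := normr_ge0 (u ord0 i - v ord0 i).
  move: (`|_|) (d.+1%:R^-1) inv_le1 => t c c_le1 t_ge0 t_lt; nra.
by rewrite sumr_const card_ord -[_ *+ d]mulr_natl ltr_pdivrMr // mul1r ltr_nat.
Qed.

Lemma walk_coord_le (T : finType) (e : rel T) d (f : T -> 'rV[R]_d) (C : R) n x y i :
  (forall x y, e x y -> eucl_dist (f x) (f y) <= C) -> walk e n x y ->
  `|f x ord0 i - f y ord0 i| <= n%:R * C.
Proof.
move=> f_edge [p [ep <- <-]]; elim: p x ep => [|z p IHp] x /=.
  by rewrite subrr normr0 mul0r.
case/andP=> /f_edge xz /IHp zp; rewrite -natr1 mulrDl mul1r [_ + C]addrC.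
apply: le_trans (ler_distD (f z ord0 i) _ _) _; rewrite lerD //.
exact: le_trans (coord_le_eucl_dist _ _ _) xz.
Qed.

Lemma truncn_eq_dist_lt1 (a b : R) :
  0 <= a -> 0 <= b -> Num.truncn a = Num.truncn b -> `|a - b| < 1.
Proof.
move=> /truncn_itv a_itv /truncn_itv b_itv ab; move: a_itv b_itv; rewrite ab.
rewrite -natr1 ltr_norml => /andP [? ?] /andP [? ?]; apply/andP; split; lra.
Qed.

Definition packing_bound (d : nat) (L : R) : nat := expn (Num.truncn (2 * L * d.+1%:R)).+1 d.

Lemma separated_packing (T : finType) d (f : T -> 'rV[R]_d) (S : seq T) (p : 'rV[R]_d)
    (L : R) :
  uniq S -> {in S &, forall z z', z != z' -> 1 <= eucl_dist (f z) (f z')} ->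
  {in S, forall z i, `|f z ord0 i - p ord0 i| <= L} -> (size S <= packing_bound d L)%nat.
Proof.
move=> S_uniq f_sep f_near; have d1_gt0 : 0 < d.+1%:R :> R by rewrite ltr0n.
pose N := Num.truncn (2 * L * d.+1%:R).
pose scaled z i := (f z ord0 i - p ord0 i + L) * d.+1%:R.
have scaled_itv z i : z \in S -> 0 <= scaled z i <= 2 * L * d.+1%:R.
  move=> /f_near /(_ i); rewrite ler_norml => /andP [? ?].
  by rewrite pmulr_lge0 // ler_pM2r //; apply/andP; split; lra.
pose g z : {ffun 'I_d -> 'I_N.+1} := [ffun i => inord (Num.truncn (scaled z i))].
have g_inj : {in S &, injective g}.
  move=> z z' zS z'S /ffunP g_eq.
  suff : eucl_dist (f z) (f z') < 1.
    by apply: contraTeq => /(f_sep z z' zS z'S); rewrite -leNgt.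
  apply: eucl_dist_lt1 => i.
  have /andP [sz0 szN] := scaled_itv z i zS; have /andP [sz'0 sz'N] := scaled_itv z' i z'S.
  move: (g_eq i); rewrite !ffunE => /(congr1 val).
  rewrite /= !inordK ?ltnS ?le_truncn // => /(truncn_eq_dist_lt1 sz0 sz'0).
  have -> : scaled z i - scaled z' i = (f z ord0 i - f z' ord0 i) * d.+1%:R.
    by rewrite /scaled; ring.
  by rewrite normrM (gtr0_norm d1_gt0) => ?; rewrite -[_^-1]div1r ltr_pdivlMr.
move: S_uniq; rewrite -(map_inj_in_uniq g_inj) => /card_uniqP; rewrite size_map => <-.
by apply: leq_trans (max_card _) _; rewrite card_ffun !card_ord.
Qed.

Definition cell (L s t : R) : int := Num.floor ((t - s) / L).

(* [in_core m L s t]: t is at distance at least m from the grid s + L Z. *)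
Definition in_core (m L s t : R) : bool :=
  ((cell L s t)%:~R * L + m <= t - s) && (t - s <= (cell L s t)%:~R * L + L - m).

Section Cells.
Variables (L : R) (L_gt0 : 0 < L).

Lemma cell_bounds s t : (cell L s t)%:~R * L <= t - s < (cell L s t)%:~R * L + L.
Proof.
rewrite /cell; move: (floor_itv ((t - s) / L)); set c := Num.floor _.
by rewrite ler_pdivlMr // ltr_pdivrMr // intrD mulr1z mulrDl mul1r.
Qed.

Lemma cell_eq_dist_lt s t t' : cell L s t = cell L s t' -> `|t - t'| < L.
Proof.
move=> tt'; have := cell_bounds s t; have := cell_bounds s t'; rewrite -tt'.
move: (_%:~R * L) => c /andP [? ?] /andP [? ?]; rewrite ltr_norml; apply/andP; split; lra.
Qed.

Lemma ltz_scale_le (a b : int) : a < b -> a%:~R * L + L <= b%:~R * L.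
Proof.
move=> ab; have : a + 1 <= b by lia.
by rewrite -(ler_int R) intrD mulr1z -(ler_pM2r L_gt0) mulrDl mul1r.
Qed.

Lemma core_cell_neq_dist m s t t' : in_core m L s t -> in_core m L s t' ->
  cell L s t != cell L s t' -> 2 * m <= `|t - t'|.
Proof.
rewrite /in_core; move: (cell L s t) (cell L s t') => c c' /andP [? ?] /andP [? ?].
case: (ltgtP c c') => [/ltz_scale_le step _ | /ltz_scale_le step _ | //].
- by rewrite distrC ler_normr; apply/orP; left; lra.
- by rewrite ler_normr; apply/orP; left; lra.
Qed.

Lemma not_core_near_grid m s t :
  ~~ in_core m L s t -> exists b : int, `|t - s - b%:~R * L| < m.
Proof.
rewrite /in_core negb_and -!ltNge; have := cell_bounds s t.
move: (cell L s t) => c /andP [? ?] /orP [?|?].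
- by exists c; rewrite ger0_norm; lra.
- by exists (c + 1); rewrite intrD mulr1z mulrDl mul1r ler0_norm; lra.
Qed.

End Cells.

Section ShiftedGrids.
Variables (d : nat) (m : R) (m_gt0 : 0 < m).

Let L := 2 * m * d.+1%:R.

Lemma in_core_shift_or k k' t : (k <= d)%nat -> (k' <= d)%nat -> k != k' ->
  in_core m L (k%:R * (2 * m)) t || in_core m L (k'%:R * (2 * m)) t.
Proof.
move=> kd k'd kk'; have L_gt0 : 0 < L by rewrite !mulr_gt0 ?ltr0n.
apply: contraT; rewrite negb_or.
case/andP=> /(not_core_near_grid L_gt0) [b near_b] /(not_core_near_grid L_gt0) [b' near_b'].
pose N : int := k'%:Z - k%:Z + (b' - b) * d.+1%:Z.
have N_eq : (t - k%:R * (2 * m) - b%:~R * L) - (t - k'%:R * (2 * m) - b'%:~R * L) =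
            N%:~R * (2 * m).
  by rewrite /N /L !(intrD, intrB, intrM) -!pmulrn; ring.
have : `|N%:~R * (2 * m)| < 2 * m.
  by rewrite -N_eq; apply: le_lt_trans (ler_normB _ _) _; lra.
rewrite normrM (@gtr0_norm _ (2 * m)) ?mulr_gt0 // -[X in _ < X]mul1r ltr_pM2r ?mulr_gt0 //.
rewrite -intr_norm ltrz1 ltr_norml /N; move: (b' - b) => c.
by case: (ltgtP c 0) => [c_neg | c_pos | ->] /andP [? ?]; nia.
Qed.

Lemma exists_core_shift (y : 'I_d -> R) :
  exists k : 'I_d.+1, [forall i, in_core m L (k%:R * (2 * m)) (y i)].
Proof.
apply/existsP; apply: contraT; rewrite negb_exists => /forallP no_shift.
have bad (k : 'I_d.+1) : exists i, ~~ in_core m L (k%:R * (2 * m)) (y i).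
  by apply/existsP; rewrite -negb_forall no_shift.
pose g k := xchoose (bad k).
suff /leq_card : injective g by rewrite !card_ord ltnn.
move=> k k' gkk'; apply/eqP; apply: contraT => kk'.
have := in_core_shift_or (y (g k)) (ltn_ord k) (ltn_ord k') kk'.
by rewrite (negbTE (xchooseP (bad k))) gkk' (negbTE (xchooseP (bad k'))).
Qed.

End ShiftedGrids.

Definition diam_bound (d : nat) (C : R) : R -> R :=
  fun r => (packing_bound d (2 * (r * C) * d.+1%:R))%:R * r.

Section Cover.
Variables (d : nat) (C r : R) (T : finType) (e : rel T) (f : T -> 'rV[R]_d).
Hypotheses (e_sym : symmetric e) (C_gt0 : 0 < C) (r_gt0 : 0 < r).
Hypothesis f_sep : forall x y, x != y -> 1 <= eucl_dist (f x) (f y).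
Hypothesis f_edge : forall x y, e x y -> eucl_dist (f x) (f y) <= C.

Let m := r * C.
Let L := 2 * m * d.+1%:R.
Let shift (k : 'I_d.+1) := k%:R * (2 * m).

Let m_gt0 : 0 < m. Proof. exact: mulr_gt0. Qed.
Let L_gt0 : 0 < L. Proof. by rewrite !mulr_gt0 ?ltr0n. Qed.

Definition color (x : T) : 'I_d.+1 :=
  odflt ord0 [pick k | [forall i, in_core m L (shift k) (f x ord0 i)]].

Lemma color_core x i : in_core m L (shift (color x)) (f x ord0 i).
Proof.
rewrite /color; case: pickP => [k /forallP // | no_shift].
by have [k] := @exists_core_shift d m m_gt0 (f x ord0); rewrite no_shift.
Qed.

Definition label (x : T) : 'I_d.+1 * {ffun 'I_d -> int} :=
  (color x, [ffun i => cell L (shift (color x)) (f x ord0 i)]).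

Definition linked : rel T := [rel x y | (label x == label y) && `[< gdist_le e x y r >]].

Definition cluster (x : T) : {set T} := [set y | connect linked x y].

Definition cover (k : 'I_d.+1) : {set {set T}} :=
  [set cluster x | x in [set x | color x == k]].

Lemma connect_linked_sym : connect_sym linked.
Proof.
apply: sym_connect_sym => x y; rewrite /linked /= eq_sym; congr andb.
by apply/asboolP/asboolP; apply: gdist_le_sym.
Qed.

Lemma connect_linked_label x y : connect linked x y -> label y = label x.
Proof.
have closed_label : closed linked [pred z | label z == label x].
  by move=> a b /andP [/eqP ab _]; rewrite !inE ab.
by move/(closed_connect closed_label); rewrite !inE eqxx => /esym/eqP.
Qed.

Lemma label_neq_far x y : color x = color y -> label x != label y -> gdist_gt e x y r.
Proof.
move=> cxy lxy n w; have [i cell_neq] : exists i,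
    cell L (shift (color x)) (f x ord0 i) != cell L (shift (color x)) (f y ord0 i).
  apply/existsP; rewrite -negb_forall; apply: contra lxy => /forallP cells_eq.
  rewrite /label -cxy; apply/eqP; congr pair.
  by apply/ffunP => i; rewrite !ffunE (eqP (cells_eq i)).
have y_core : in_core m L (shift (color x)) (f y ord0 i) by rewrite cxy color_core.
have := core_cell_neq_dist L_gt0 (color_core x i) y_core cell_neq.
move/le_trans/(_ (walk_coord_le i f_edge w)); rewrite /m mulrA ler_pM2r //.
by apply: lt_le_trans; rewrite ltr_pMl // ltr1n.
Qed.

Lemma connect_linked_coord_lt x z i : connect linked x z -> `|f z ord0 i - f x ord0 i| < L.
Proof.
case/connect_linked_label => cz /ffunP /(_ i); rewrite !ffunE cz.
exact: cell_eq_dist_lt.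
Qed.

Lemma cover_covers x : exists k, exists2 A, A \in cover k & x \in A.
Proof.
exists (color x), (cluster x); last by rewrite inE connect0.
by apply/imsetP; exists x; rewrite ?inE.
Qed.

Lemma cover_disjoint k : disjoint_family e r (cover k).
Proof.
move=> _ _ /imsetP [x0 + ->] /imsetP [y0 + ->] neq x y.
rewrite !inE => /eqP cx0 /eqP cy0 x0x y0y.
have [lx ly] := (connect_linked_label x0x, connect_linked_label y0y).
case: (eqVneq (label x) (label y)) => lxy; last first.
  by apply: label_neq_far lxy; case: lx => -> _; case: ly => -> _; rewrite cx0 cy0.
move=> n w; rewrite ltNge; apply: contra neq => n_le_r.
have xy : linked x y by rewrite /linked /= lxy eqxx; apply/asboolP; exists n.
have x0y0 : connect linked x0 y0.
  by rewrite (connect_trans (connect_trans x0x (connect1 xy))) // connect_linked_sym.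
by apply/eqP/setP => z; rewrite !inE (same_connect connect_linked_sym x0y0).
Qed.

Lemma cover_bounded k : bounded_family e (diam_bound d C r) (cover k).
Proof.
move=> _ /imsetP [x0 _ ->] x y; rewrite !inE => x0x x0y.
have /connectP [p xp ->] : connect linked x y.
  by rewrite (connect_trans _ x0y) // connect_linked_sym.
case/shortenP: xp => p' xp' uniq_p' _.
have size_le : (size (x :: p') <= packing_bound d L)%nat.
  apply: (separated_packing (p := f x)) uniq_p' _ _ => [z z' _ _|z xz i]; first exact: f_sep.
  exact/ltW/connect_linked_coord_lt/(path_connect xp').
apply: (gdist_le_path (r := r)) xp' _ => [a b /andP [_ /asboolP] //|].
by rewrite ler_pM2r // ler_nat; apply: leq_trans size_le.
Qed.

End Cover.

Theorem theorem6p1 (d : nat) (C : R) :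
  is_true (leq 1 d) -> 1 <= C -> asdim_class_le d (fun T e => @in_Dclass d C T e).
Proof.
move=> _ C_ge1; have C_gt0 : 0 < C := lt_le_trans ltr01 C_ge1.
exists (diam_bound d C); split => [r r_gt0 | T e [e_sym _] [f [f_sep f_edge]] r r_gt0].
  by rewrite mulr_gt0 // ltr0n expn_gt0.
exists (cover C r e f); split; first exact: cover_covers.
by move=> k; split; [exact: cover_disjoint | exact: cover_bounded].
Qed.
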